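(* Let $k$ be a positive integer with $4\mid k$. Then $S_3(k;4)\ge 4k-5$.
   Context: Let $k,r$ be positive integers with $r\mid k$. A solution to $\mathcal{E}$ is a $k$-tuple $(x_1,\dots,x_k)$ of positive integers (not necessarily distinct) with $\sum_{i=1}^{k-1}x_i=x_k$; it lies in $[1,n]$ if all $x_i\in\{1,\dots,n\}$. Given a coloring $\chi$ of $[1,n]$ with colors in $\{0,1,\dots,r-1\}$ (viewed as integers), a solution is $r$-zero-sum if $\sum_{i=1}^k\chi(x_i)\equiv 0\pmod r$. $S_3(k;r)$ denotes the least positive integer $n$ such that every coloring $\chi:[1,n]\to\{0,1,\dots,r-1\}$ admits an $r$-zero-sum solution to $\mathcal{E}$ in $[1,n]$. *)

From mathcomp Require Import all_boot.
Set Implicit Arguments. Unset Strict Implicit. Unset Printing Implicit Defensive.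

(* A k-tuple (x_1,...,x_k) is encoded as x : nat -> nat, using the entries
   x 0, ..., x (k-1) (0-based indexing). *)
Definition is_solution_in (k n : nat) (x : nat -> nat) : Prop :=
  (forall i, i < k -> 1 <= x i <= n) /\
  \sum_(i < k.-1) x i = x k.-1.

Definition is_coloring (r n : nat) (chi : nat -> nat) : Prop :=
  forall m, 1 <= m <= n -> chi m < r.

Definition zero_sum (k r : nat) (chi : nat -> nat) (x : nat -> nat) : Prop :=
  (\sum_(i < k) chi (x i)) %% r = 0.

Definition zs_property (k r n : nat) : Prop :=
  forall chi, is_coloring r n chi ->
    exists x, is_solution_in k n x /\ zero_sum k r chi x.

(* "S_3(k;r) >= m": S_3(k;r) is the least positive n with zs_property k r n,
   so S_3(k;r) >= m means every positive n with the property is >= m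
   (vacuously true if no such n exists, i.e. S_3 = infinity). *)
Definition S3_ge (k r m : nat) : Prop :=
  forall n, 0 < n -> zs_property k r n -> m <= n.

From mathcomp Require Import all_boot zify.

Set Implicit Arguments.
Unset Strict Implicit.
Unset Printing Implicit Defensive.

(* Color x by chi(x) = x - 1 + s(x) (mod 4), with a correction s vanishing
   below k.  On a solution the terms x_i - 1 add up to 2 x_k - k, which is
   2 x_k mod 4, so the color sum is 2 x_k + s(x_k) plus the sum of s over the
   summands.  If n <= 4k - 6, positivity of the summands forces x_k >= k - 1,
   every summand <= 3k - 4, and at most two summands >= k (at most one unless
   x_k >= 3k - 3); so that last sum is at most 2, resp. at most 1.  And s is
   chosen so that 2 x_k + s(x_k) is 1 mod 4 for x_k >= 3k - 3 and 1 or 2 mod 4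
   below, keeping the total off 0 mod 4. *)

Definition color_shift (k x : nat) : nat :=
  if x < k then 0
  else if x <= 3 * k - 4 then (if odd x then 0 else 1)
  else (if odd x then 3 else 1).

Definition zs_free_coloring (k x : nat) : nat := (x + 3 + color_shift k x) %% 4.

Lemma zs_free_coloring_lt4 (k x : nat) : zs_free_coloring k x < 4.
Proof. exact: ltn_pmod. Qed.

Lemma color_shift_le (k x : nat) :
  color_shift k x <= (k <= x) + 3 * (3 * k - 3 <= x).
Proof.
rewrite /color_shift; case: ltnP => // le_k_x /=.
by case: (leqP x (3 * k - 4)); case: (leqP (3 * k - 3) x); case: odd => /=; lia.
Qed.

Lemma sum_pos_ge_count (m t : nat) (F : 'I_m -> nat) :
  (forall i, 0 < F i) ->
  m + t.-1 * \sum_(i < m) (t <= F i) <= \sum_(i < m) F i.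
Proof.
move=> F_pos.
have : \sum_(i < m) (1 + t.-1 * (t <= F i)) <= \sum_(i < m) F i.
  by apply: leq_sum => i _; have := F_pos i; case: leqP => /=; lia.
by rewrite big_split /= sum1_card card_ord -big_distrr.
Qed.

Lemma zs_free_coloring_sum_mod (k : nat) (x : nat -> nat) :
  0 < k -> 4 %| k -> \sum_(i < k.-1) x i = x k.-1 ->
  \sum_(i < k) zs_free_coloring k (x i) =
  2 * x k.-1 + \sum_(i < k.-1) color_shift k (x i) + color_shift k (x k.-1)
    %[mod 4].
Proof.
case: k => // k _ /dvdnP[q def_k] /= x_sum.
rewrite modn_summ big_ord_recr /= !big_split /= sum_nat_const card_ord x_sum.
set G := \sum_(i < k) _; set X := x k.
have -> : X + k * 3 + G + (X + 3 + color_shift k.+1 X) =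
          3 * q * 4 + (2 * X + G + color_shift k.+1 X) by lia.
exact: modnMDl.
Qed.

Lemma color_sum_mod4_neq0 (k X b h s : nat) :
  0 < k -> ~~ odd k ->
  k.-1 + k.-1 * b <= X -> k.-1 + (3 * k - 4) * h <= X -> X <= 4 * k - 6 ->
  s <= b + 3 * h ->
  (2 * X + s + color_shift k X) %% 4 != 0.
Proof.
move=> k_gt0 k_even few_large no_huge X_small s_le.
have h0 : h = 0 by case: h no_huge s_le => // h; nia.
have b_cases : [\/ b = 0, b = 1 /\ 2 * k - 2 <= X | b = 2 /\ 3 * k - 3 <= X].
  by case: b few_large s_le => [|[|[|b]]] /=; rewrite ?muln0 ?muln1 => *;
    [constructor 1 | constructor 2 | constructor 3 | nia]; lia.
have := odd_double_half k; rewrite (negbTE k_even) /= => def_k.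
rewrite /color_shift; case: (ltnP X k) => X_k;
  case: (leqP X (3 * k - 4)) => X_mid;
  have := odd_double_half X; case: odd => /= def_X; case: b_cases; lia.
Qed.

Theorem theorem6 (k : nat) (hk : 0 < k) (h4 : 4 %| k) :
  S3_ge k 4 (4 * k - 5).
Proof.
move=> n _ zs; rewrite leqNgt; apply/negP => n_small.
have [x [[x_range x_sum] zs_x]] :=
  zs (zs_free_coloring k) (fun m _ => zs_free_coloring_lt4 k m).
have x_pos (i : 'I_k.-1) : 0 < x i.
  by have := x_range i; have := ltn_ord i; lia.
have X_small : x k.-1 <= 4 * k - 6 by have := x_range k.-1; lia.
have large_count := sum_pos_ge_count k x_pos.
rewrite x_sum in large_count.
have huge_count :
    k.-1 + (3 * k - 4) * \sum_(i < k.-1) (3 * k - 3 <= x i) <= x k.-1.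
  rewrite -x_sum (_ : 3 * k - 4 = (3 * k - 3).-1); last by lia.
  exact: sum_pos_ge_count.
have shift_le : \sum_(i < k.-1) color_shift k (x i) <=
    \sum_(i < k.-1) (k <= x i) + 3 * \sum_(i < k.-1) (3 * k - 3 <= x i).
  rewrite big_distrr -big_split.
  by apply: leq_sum => i _; apply: color_shift_le.
have k_even : ~~ odd k by case/dvdnP: h4 => q ->; rewrite oddM andbF.
have := color_sum_mod4_neq0 hk k_even large_count huge_count X_small shift_le.
by rewrite -(zs_free_coloring_sum_mod hk h4 x_sum) zs_x.
Qed.
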